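(* Let $(V,\nu,\tau,\tau^* )$ be a PN space in which $\nu(V)\subseteq D^+$ and $\tau(D^+\times D^+)\subseteq D^+$. Then every $D$-compact subset $A$ of $V$ is $D$-bounded and closed (in the strong topology).
   Context: $\Delta^{+}$ is the set of functions $F:[-\infty,+\infty]\to[0,1]$ that are left-continuous on $\mathbb{R}$, nondecreasing, with $F(0)=0$ and $F(+\infty)=1$, ordered pointwise; $D^{+}=\{F\in\Delta^{+}: l^{-}F(+\infty)=1\}$, where $l^{-}f(x)=\lim_{t\to x^{-}}f(t)$. $\varepsilon_0$ is the d.f. equal to $0$ for $x\le0$ and $1$ for $x>0$. A triangle function is a map $\tau:\Delta^+\times\Delta^+\to\Delta^+$ that is associative, commutative, nondecreasing in each argument, with unit $\varepsilon_0$. A PN space is a quadruple $(V,\nu,\tau,\tau^* )$ with $V$ a real vector space, $\tau\le\tau^*$ continuous triangle functions, and $\nu:V\to\Delta^+$ such that for all $p,q\in V$: (N1) $\nu_p=\varepsilon_0$ iff $p=\theta$; (N2) $\nu_{-p}=\nu_p$; (N3) $\nu_{p+q}\ge\tau(\nu_p,\nu_q)$; (N4) $\nu_p\le\tau^*(\nu_{\lambda p},\nu_{(1-\lambda)p})$ for all $\lambda\in[0,1]$. The strong topology on $V$ is generated by the neighborhoods $N_p(\lambda)=\{q\in V:\nu_{p-q}(\lambda)>1-\lambda\}$, $\lambda>0$; $(p_m)$ strongly converges to $p$ if for every $\lambda>0$ eventually $p_m\in N_p(\lambda)$. For nonempty $A\subseteq V$, $R_A(x)=l^{-}\inf\{\nu_q(x):q\in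 A\}$ for $x\in[0,+\infty)$ and $R_A(+\infty)=1$; $A$ is $D$-bounded if $R_A\in D^+$. A subset $A\subseteq V$ is $D$-compact if every sequence in $A$ has a subsequence strongly converging to a vector of $A$. *)

From Stdlib Require Import Reals.
From Coquelicot Require Import Coquelicot.
Open Scope R_scope.

(* A distance distribution function F : [-oo,+oo] -> [0,1] is represented by its
   restriction to R; the values F(-oo) = 0 and F(+oo) = 1 are implicit
   (F(+oo) = 1 is part of the definition of Delta^+, and F(-oo) = 0 is forced by
   monotonicity and F(0) = 0). *)
Definition dfun := R -> R.

Definition left_continuous (F : dfun) : Prop :=
  forall x : R, filterlim F (at_left x) (locally (F x)).

Definition nondecreasing (F : dfun) : Prop :=
  forall x y : R, x <= y -> F x <= F y.

Definition in_Delta (F : dfun) : Prop :=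
  (forall x, 0 <= F x <= 1) /\ left_continuous F /\ nondecreasing F /\ F 0 = 0.

Definition in_Dplus (F : dfun) : Prop :=
  in_Delta F /\ is_lim F p_infty 1.

Definition dle (F G : dfun) : Prop := forall x, F x <= G x.
Definition deq (F G : dfun) : Prop := forall x, F x = G x.

Definition eps0 : dfun := fun x => if Rle_dec x 0 then 0 else 1.

Definition triangle_function (tau : dfun -> dfun -> dfun) : Prop :=
  (forall F G, in_Delta F -> in_Delta G -> in_Delta (tau F G)) /\
  (forall F G H, in_Delta F -> in_Delta G -> in_Delta H ->
     deq (tau (tau F G) H) (tau F (tau G H))) /\
  (forall F G, in_Delta F -> in_Delta G -> deq (tau F G) (tau G F)) /\
  (forall F F' G, in_Delta F -> in_Delta F' -> in_Delta G -> dle F F' ->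
     dle (tau F G) (tau F' G)) /\
  (forall F G G', in_Delta F -> in_Delta G -> in_Delta G' -> dle G G' ->
     dle (tau F G) (tau F G')) /\
  (forall F, in_Delta F -> deq (tau F eps0) F).

Definition weak_conv (Fn : nat -> dfun) (F : dfun) : Prop :=
  forall x : R, continuous F x -> is_lim_seq (fun n => Fn n x) (F x).

(* continuity of a triangle function w.r.t. the (metrizable) topology of weak
   convergence on Delta^+, stated sequentially *)
Definition tf_continuous (tau : dfun -> dfun -> dfun) : Prop :=
  forall (Fn Gn : nat -> dfun) (F G : dfun),
    (forall n, in_Delta (Fn n)) -> (forall n, in_Delta (Gn n)) ->
    in_Delta F -> in_Delta G ->
    weak_conv Fn F -> weak_conv Gn G ->
    weak_conv (fun n => tau (Fn n) (Gn n)) (tau F G).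

Definition PN_space {V : ModuleSpace R_Ring} (nu : V -> dfun)
  (tau taus : dfun -> dfun -> dfun) : Prop :=
  triangle_function tau /\ tf_continuous tau /\
  triangle_function taus /\ tf_continuous taus /\
  (forall F G, in_Delta F -> in_Delta G -> dle (tau F G) (taus F G)) /\
  (forall p : V, in_Delta (nu p)) /\
  (forall p : V, deq (nu p) eps0 <-> p = zero) /\
  (forall p : V, deq (nu (opp p)) (nu p)) /\
  (forall p q : V, dle (tau (nu p) (nu q)) (nu (plus p q))) /\
  (forall (p : V) (l : R), 0 <= l <= 1 ->
              dle (nu p) (taus (nu (scal l p)) (nu (scal (1 - l) p)))).

Definition N_strong {V : ModuleSpace R_Ring} (nu : V -> dfun) (p : V) (l : R)
  (q : V) : Prop := nu (minus p q) l > 1 - l.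

Definition strong_open {V : ModuleSpace R_Ring} (nu : V -> dfun) (U : V -> Prop)
  : Prop :=
  forall p, U p -> exists l, l > 0 /\ forall q, N_strong nu p l q -> U q.

Definition strong_closed {V : ModuleSpace R_Ring} (nu : V -> dfun)
  (A : V -> Prop) : Prop :=
  strong_open nu (fun p => ~ A p).

Definition strong_conv {V : ModuleSpace R_Ring} (nu : V -> dfun)
  (pm : nat -> V) (p : V) : Prop :=
  forall l, l > 0 -> exists N : nat, forall m, (N <= m)%nat -> N_strong nu p l (pm m).

Definition D_compact {V : ModuleSpace R_Ring} (nu : V -> dfun) (A : V -> Prop)
  : Prop :=
  forall pm : nat -> V, (forall m, A (pm m)) ->
    exists (phi : nat -> nat) (p : V),
      (forall m, (phi m < phi (S m))%nat) /\ A p /\ strong_conv nu (fun m => pm (phi m)) p.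

Definition inf_nu {V : ModuleSpace R_Ring} (nu : V -> dfun) (A : V -> Prop)
  (t : R) : R :=
  real (Glb_Rbar (fun y => exists q, A q /\ y = nu q t)).

Definition is_R_A {V : ModuleSpace R_Ring} (nu : V -> dfun) (A : V -> Prop)
  (F : dfun) : Prop :=
  forall x, 0 <= x -> filterlim (inf_nu nu A) (at_left x) (locally (F x)).

Definition D_bounded {V : ModuleSpace R_Ring} (nu : V -> dfun) (A : V -> Prop)
  : Prop :=
  exists F, is_R_A nu A F /\ in_Dplus F.

From Stdlib Require Import Reals Lra Lia Classical ClassicalEpsilon.
From Coquelicot Require Import Coquelicot.
Open Scope R_scope.

(* Strong limits are unique: by (N3), nu (p - p') >= tau (nu (p - r_m)) (nu (r_m - p')),
   and by the continuity of tau the right-hand side tends weakly to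
   tau eps0 eps0 = eps0.  So if p is in the strong closure of A, a sequence of A
   converging strongly to p has, by D-compactness, a subsequence converging to a point
   of A, which must be p: A is closed.
   For D-boundedness, t |-> inf_{q in A} nu_q(t) is nondecreasing, so R_A is its
   left-limit function, and R_A tends to 1 because nu_q(x) >= 1 - e uniformly on A
   for x large: otherwise some q_n in A have nu_{q_n}(n) < 1 - e, a subsequence
   converges to p in A, and (N3) with the continuity of tau makes nu_{q_n}(x)
   eventually almost as large as nu_p(x), which tends to 1. *)

Lemma plus_minus_cancel_r {G : AbelianGroup} (x y : G) : plus (minus x y) y = x.
Proof.
  unfold minus. rewrite <- plus_assoc, plus_opp_l, plus_zero_r. reflexivity.
Qed.

Lemma minus_eq_zero_eq {G : AbelianGroup} (x y : G) : minus x y = zero -> x = y.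
Proof.
  intro Hxy. rewrite <- (plus_minus_cancel_r x y), Hxy. apply plus_zero_l.
Qed.

Lemma strict_incr_ge_id (phi : nat -> nat) :
  (forall m, (phi m < phi (S m))%nat) -> forall m, (m <= phi m)%nat.
Proof.
  intros Hphi m. induction m as [|m IH]; [lia|]. specialize (Hphi m). lia.
Qed.

Lemma continuous_at_left (f : R -> R) x :
  continuous f x -> filterlim f (at_left x) (locally (f x)).
Proof. apply filterlim_filter_le_1, filter_le_within. Qed.

Lemma nondecreasing_at_left (h : R -> R) x L :
  nondecreasing h -> (forall t, t < x -> h t <= L) ->
  (forall eps, 0 < eps -> exists t, t < x /\ L - eps < h t) ->
  filterlim h (at_left x) (locally L).
Proof.
  intros Hmono Hub Happrox. apply filterlim_locally. intro eps.
  destruct (Happrox eps (cond_pos eps)) as [t0 [Ht0 Hh]].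
  assert (Hd : 0 < x - t0) by lra.
  exists (mkposreal _ Hd). intros y Hy Hyx.
  change (Rabs (y - x) < x - t0) in Hy. apply Rabs_def2 in Hy.
  change (Rabs (h y - L) < eps).
  specialize (Hub y Hyx). specialize (Hmono t0 y ltac:(lra)).
  apply Rabs_def1; lra.
Qed.

Definition left_sup (g : R -> R) (x : R) : R :=
  real (Lub_Rbar (fun y => exists t, t < x /\ y = g t)).

Section LeftSup.

Variables (g : R -> R) (M : R).
Hypothesis g_bounded : forall t, g t <= M.

Lemma left_sup_finite x :
  Lub_Rbar (fun y => exists t, t < x /\ y = g t) = Finite (left_sup g x).
Proof.
  unfold left_sup.
  destruct (Lub_Rbar_correct (fun y => exists t, t < x /\ y = g t)) as [Hub Hleast].
  revert Hub Hleast. case (Lub_Rbar (fun y => exists t, t < x /\ y = g t)).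
  - reflexivity.
  - intros _ Hleast. exfalso. apply (Hleast (Finite M)). intros y [t [_ ->]]. apply g_bounded.
  - intros Hub _. exfalso. apply (Hub (g (x - 1))). exists (x - 1). split; [lra | reflexivity].
Qed.

Lemma left_sup_ge x t : t < x -> g t <= left_sup g x.
Proof.
  intro Ht. destruct (Lub_Rbar_correct (fun y => exists t, t < x /\ y = g t)) as [Hub _].
  rewrite left_sup_finite in Hub. apply (Hub (g t)). eauto.
Qed.

Lemma left_sup_le x b : (forall t, t < x -> g t <= b) -> left_sup g x <= b.
Proof.
  intro Hb. destruct (Lub_Rbar_correct (fun y => exists t, t < x /\ y = g t)) as [_ Hleast].
  rewrite left_sup_finite in Hleast. apply (Hleast (Finite b)).
  intros y [t [Ht ->]]. apply Hb, Ht.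
Qed.

Lemma left_sup_approx x eps : 0 < eps -> exists t, t < x /\ left_sup g x - eps < g t.
Proof.
  intro Heps. apply NNPP. intro Hnot.
  assert (left_sup g x <= left_sup g x - eps); [|lra].
  apply left_sup_le. intros t Ht. apply Rnot_lt_le. intro Hlt. apply Hnot. eauto.
Qed.

Lemma left_sup_nondecreasing : nondecreasing (left_sup g).
Proof.
  intros s t Hst. apply left_sup_le. intros u Hu. apply left_sup_ge. lra.
Qed.

Lemma left_sup_left_continuous : left_continuous (left_sup g).
Proof.
  intro x. apply nondecreasing_at_left.
  - exact left_sup_nondecreasing.
  - intros t Ht. apply left_sup_nondecreasing. lra.
  - intros eps Heps. destruct (left_sup_approx x eps Heps) as [t [Ht Hgt]].
    exists ((t + x) / 2). split; [lra|].
    eapply Rlt_le_trans; [exact Hgt | apply left_sup_ge; lra].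
Qed.

Hypothesis g_nondecreasing : nondecreasing g.

Lemma left_sup_is_left_limit x : filterlim g (at_left x) (locally (left_sup g x)).
Proof.
  apply nondecreasing_at_left; auto using left_sup_ge, left_sup_approx.
Qed.

End LeftSup.

Lemma left_sup_Delta (g : R -> R) :
  (forall t, 0 <= g t <= 1) -> (forall t, t <= 0 -> g t = 0) -> in_Delta (left_sup g).
Proof.
  intros Hg Hg0.
  assert (Hub : forall t, g t <= 1) by apply Hg.
  split; [|split; [|split]].
  - intro x. split.
    + apply Rle_trans with (g (x - 1)); [apply Hg | apply (left_sup_ge g 1 Hub); lra].
    + apply (left_sup_le g 1 Hub). auto.
  - exact (left_sup_left_continuous g 1 Hub).
  - exact (left_sup_nondecreasing g 1 Hub).
  - apply Rle_antisym.
    + apply (left_sup_le g 1 Hub). intros t Ht. rewrite Hg0; lra.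
    + apply Rle_trans with (g (-1)); [apply Hg | apply (left_sup_ge g 1 Hub); lra].
Qed.

Lemma left_sup_lim_p_infty (g : R -> R) :
  (forall t, g t <= 1) -> (forall e, 0 < e -> exists x0, 1 - e <= g x0) ->
  is_lim (left_sup g) p_infty 1.
Proof.
  intros Hub Hnear. apply is_lim_spec. intro eps.
  assert (Heps : 0 < eps / 2) by (destruct eps; simpl; lra).
  destruct (Hnear _ Heps) as [x0 Hx0].
  exists x0. intros x Hx.
  assert (g x0 <= left_sup g x) by (apply (left_sup_ge g 1 Hub); lra).
  assert (left_sup g x <= 1) by (apply (left_sup_le g 1 Hub); auto).
  apply Rabs_def1; destruct eps; simpl in *; lra.
Qed.

Lemma Delta_nonpos (F : dfun) x : in_Delta F -> x <= 0 -> F x = 0.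
Proof.
  intros [Fb [_ [Fmono F0]]] Hx. specialize (Fmono _ _ Hx). specialize (Fb x). lra.
Qed.

Lemma Dplus_eventually_ge (F : dfun) c :
  in_Dplus F -> c < 1 -> exists a, 0 <= a /\ forall x, a < x -> c <= F x.
Proof.
  intros [_ Hlim] Hc. apply is_lim_spec in Hlim.
  assert (Hd : 0 < 1 - c) by lra.
  destruct (Hlim (mkposreal _ Hd)) as [M HM].
  exists (Rmax 0 M). split; [apply Rmax_l|].
  intros x Hx. specialize (HM x (Rle_lt_trans _ _ _ (Rmax_r 0 M) Hx)).
  simpl in HM. apply Rabs_def2 in HM. lra.
Qed.

Lemma eps0_nonpos x : x <= 0 -> eps0 x = 0.
Proof. unfold eps0. destruct (Rle_dec x 0); lra. Qed.

Lemma eps0_pos x : 0 < x -> eps0 x = 1.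
Proof. unfold eps0. destruct (Rle_dec x 0); lra. Qed.

Lemma eps0_continuous x : 0 < x -> continuous eps0 x.
Proof.
  intro Hx. apply filterlim_locally. intro eps. exists (mkposreal x Hx). intros y Hy.
  change (Rabs (y - x) < x) in Hy. apply Rabs_def2 in Hy.
  rewrite !eps0_pos by lra. apply ball_center.
Qed.

Lemma eps0_Delta : in_Delta eps0.
Proof.
  split; [|split; [|split]].
  - intro x. unfold eps0. destruct (Rle_dec x 0); lra.
  - intro x. destruct (Rle_lt_dec x 0) as [Hx|Hx].
    + apply filterlim_locally. intro eps. exists (mkposreal 1 Rlt_0_1). intros y _ Hy.
      rewrite !eps0_nonpos by lra. apply ball_center.
    + exact (continuous_at_left _ _ (eps0_continuous x Hx)).
  - intros x y Hxy. unfold eps0. destruct (Rle_dec x 0), (Rle_dec y 0); lra.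
  - apply eps0_nonpos. lra.
Qed.

Lemma Delta_eq_eps0 (F : dfun) : in_Delta F -> (forall x, 0 < x -> 1 <= F x) -> deq F eps0.
Proof.
  intros HF H1 x. destruct (Rle_lt_dec x 0) as [Hx|Hx].
  - rewrite eps0_nonpos, Delta_nonpos; auto.
  - rewrite eps0_pos by exact Hx. destruct HF as [Fb _].
    specialize (H1 x Hx). specialize (Fb x). lra.
Qed.

Lemma triangle_eps0_l tau (F : dfun) :
  triangle_function tau -> in_Delta F -> deq (tau eps0 F) F.
Proof.
  intros (_ & _ & Tcomm & _ & _ & Tunit) HF x.
  rewrite (Tcomm _ _ eps0_Delta HF). apply Tunit, HF.
Qed.

Lemma weak_conv_deq (Fn : nat -> dfun) (F G : dfun) :
  weak_conv Fn F -> deq F G -> weak_conv Fn G.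
Proof.
  intros HF HFG x HGx. rewrite <- HFG. apply HF.
  apply continuous_ext with G; [intro; symmetry; apply HFG | exact HGx].
Qed.

Definition clamp01 (u : R) : R := Rmin 1 (Rmax 0 u).

Lemma clamp01_bounds u : 0 <= clamp01 u <= 1.
Proof. unfold clamp01, Rmin, Rmax. repeat destruct Rle_dec; lra. Qed.

Lemma clamp01_nondecreasing : nondecreasing clamp01.
Proof. intros u v Huv. unfold clamp01, Rmin, Rmax. repeat destruct Rle_dec; lra. Qed.

Lemma clamp01_lipschitz u v : Rabs (clamp01 u - clamp01 v) <= Rabs (u - v).
Proof.
  unfold clamp01, Rmin, Rmax. repeat destruct Rle_dec; unfold Rabs; repeat destruct Rcase_abs; lra.
Qed.

Definition ramp (c a : R) : dfun := fun x => c * clamp01 (x - a).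

Section Ramp.

Variables (c a : R).
Hypothesis c_bounds : 0 <= c <= 1.

Lemma ramp_left x : x <= a -> ramp c a x = 0.
Proof.
  intro Hx. unfold ramp.
  replace (clamp01 (x - a)) with 0 by (unfold clamp01, Rmin, Rmax; repeat destruct Rle_dec; lra).
  apply Rmult_0_r.
Qed.

Lemma ramp_lipschitz x y : Rabs (ramp c a x - ramp c a y) <= Rabs (x - y).
Proof.
  unfold ramp. rewrite <- Rmult_minus_distr_l, Rabs_mult, (Rabs_right c) by lra.
  pose proof (clamp01_lipschitz (x - a) (y - a)) as Hlip.
  replace (x - a - (y - a)) with (x - y) in Hlip by ring.
  pose proof (Rabs_pos (clamp01 (x - a) - clamp01 (y - a))). nra.
Qed.

Lemma ramp_continuous x : continuous (ramp c a) x.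
Proof.
  apply filterlim_locally. intro eps. exists eps. intros y Hy.
  apply Rle_lt_trans with (Rabs (y - x)); [apply ramp_lipschitz | exact Hy].
Qed.

Lemma ramp_Delta : 0 <= a -> in_Delta (ramp c a).
Proof.
  intro Ha. split; [|split; [|split]].
  - intro x. unfold ramp. pose proof (clamp01_bounds (x - a)). nra.
  - intro x. apply (continuous_at_left (ramp c a)), ramp_continuous.
  - intros x y Hxy. unfold ramp. apply Rmult_le_compat_l; [lra | apply clamp01_nondecreasing; lra].
  - apply ramp_left. exact Ha.
Qed.

Lemma ramp_top : ramp c a (a + 1) = c.
Proof. unfold ramp, clamp01, Rmin, Rmax. repeat destruct Rle_dec; lra. Qed.

Lemma ramp_le (F : dfun) :
  (forall x, 0 <= F x) -> (forall x, a < x -> c <= F x) -> dle (ramp c a) F.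
Proof.
  intros F0 Fc x. destruct (Rle_lt_dec x a) as [Hx|Hx].
  - rewrite ramp_left by exact Hx. apply F0.
  - unfold ramp. specialize (Fc x Hx). pose proof (clamp01_bounds (x - a)). nra.
Qed.

End Ramp.

Section InfNu.

Variables (V : ModuleSpace R_Ring) (nu : V -> dfun) (A : V -> Prop) (a : V).
Hypothesis nu_Delta : forall p, in_Delta (nu p).
Hypothesis A_a : A a.

Lemma inf_nu_finite t :
  Glb_Rbar (fun y => exists q, A q /\ y = nu q t) = Finite (inf_nu nu A t).
Proof.
  unfold inf_nu.
  destruct (Glb_Rbar_correct (fun y => exists q, A q /\ y = nu q t)) as [Hlb Hgreatest].
  revert Hlb Hgreatest. case (Glb_Rbar (fun y => exists q, A q /\ y = nu q t)).
  - reflexivity.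
  - intros Hlb _. exfalso. apply (Hlb (nu a t)). eauto.
  - intros _ Hgreatest. exfalso. apply (Hgreatest (Finite 0)).
    intros y [q [_ ->]]. apply nu_Delta.
Qed.

Lemma inf_nu_le q t : A q -> inf_nu nu A t <= nu q t.
Proof.
  intro Hq. destruct (Glb_Rbar_correct (fun y => exists q, A q /\ y = nu q t)) as [Hlb _].
  rewrite inf_nu_finite in Hlb. apply (Hlb (nu q t)). eauto.
Qed.

Lemma inf_nu_ge t b : (forall q, A q -> b <= nu q t) -> b <= inf_nu nu A t.
Proof.
  intro Hb. destruct (Glb_Rbar_correct (fun y => exists q, A q /\ y = nu q t)) as [_ Hgreatest].
  rewrite inf_nu_finite in Hgreatest. apply (Hgreatest (Finite b)).
  intros y [q [Hq ->]]. apply Hb, Hq.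
Qed.

Lemma inf_nu_bounds t : 0 <= inf_nu nu A t <= 1.
Proof.
  split.
  - apply inf_nu_ge. intros q _. apply nu_Delta.
  - apply Rle_trans with (nu a t); [apply inf_nu_le, A_a | apply nu_Delta].
Qed.

Lemma inf_nu_nondecreasing : nondecreasing (inf_nu nu A).
Proof.
  intros s t Hst. apply inf_nu_ge. intros q Hq.
  apply Rle_trans with (nu q s); [apply inf_nu_le, Hq | apply nu_Delta, Hst].
Qed.

Lemma inf_nu_nonpos t : t <= 0 -> inf_nu nu A t = 0.
Proof.
  intro Ht. apply Rle_antisym; [|apply inf_nu_bounds].
  rewrite <- (Delta_nonpos (nu a) t (nu_Delta a) Ht). apply inf_nu_le, A_a.
Qed.

End InfNu.

Section StrongConvergence.

Variables (V : ModuleSpace R_Ring) (nu : V -> dfun).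
Hypothesis nu_Delta : forall p, in_Delta (nu p).

Lemma strong_conv_subseq r p phi :
  (forall m, (phi m < phi (S m))%nat) ->
  strong_conv nu r p -> strong_conv nu (fun m => r (phi m)) p.
Proof.
  intros Hphi Hr l Hl. destruct (Hr l Hl) as [N HN]. exists N. intros m Hm.
  apply HN. pose proof (strict_incr_ge_id phi Hphi m). lia.
Qed.

Lemma strong_conv_inv_succ r p :
  (forall n, N_strong nu p (/ (INR n + 1)) (r n)) -> strong_conv nu r p.
Proof.
  intros Hr l Hl. destruct (archimed_cor1 l Hl) as [N [HNl HN]].
  exists N. intros m Hm. specialize (Hr m). unfold N_strong in *.
  assert (HNm : INR N <= INR m) by (apply le_INR; exact Hm).
  assert (HN0 : 0 < INR N) by (apply lt_0_INR; exact HN).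
  assert (Hinv : / (INR m + 1) <= / INR N) by (apply Rinv_le_contravar; lra).
  destruct (nu_Delta (minus p (r m))) as [_ [_ [Hmono _]]].
  specialize (Hmono (/ (INR m + 1)) l ltac:(lra)). lra.
Qed.

Lemma strong_conv_weak_eps0 r p :
  strong_conv nu r p -> weak_conv (fun m => nu (minus p (r m))) eps0.
Proof.
  intros Hr x _. destruct (Rle_lt_dec x 0) as [Hx|Hx].
  - rewrite eps0_nonpos by exact Hx.
    apply is_lim_seq_ext with (fun _ => 0); [|apply is_lim_seq_const].
    intro m. symmetry. apply Delta_nonpos; auto.
  - rewrite eps0_pos by exact Hx. apply is_lim_seq_spec. intro eps.
    set (l := Rmin x eps / 2).
    assert (Hl : 0 < l) by (unfold l; apply Rmin_case; destruct eps; simpl; lra).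
    destruct (Hr l Hl) as [N HN]. exists N. intros m Hm. specialize (HN m Hm).
    unfold N_strong in HN.
    destruct (nu_Delta (minus p (r m))) as [Hb [_ [Hmono _]]].
    assert (l <= x) by (unfold l; pose proof (Rmin_l x eps); lra).
    assert (l < eps) by (unfold l; pose proof (Rmin_r x eps); destruct eps; simpl in *; lra).
    specialize (Hmono l x ltac:(assumption)). specialize (Hb x).
    apply Rabs_def1; lra.
Qed.

Hypothesis nu_opp : forall p, deq (nu (opp p)) (nu p).

Lemma strong_conv_weak_eps0_opp r p :
  strong_conv nu r p -> weak_conv (fun m => nu (minus (r m) p)) eps0.
Proof.
  intros Hr x Hx. apply is_lim_seq_ext with (fun m => nu (minus p (r m)) x).
  - intro m. rewrite <- opp_minus. apply (nu_opp _ x).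
  - exact (strong_conv_weak_eps0 r p Hr x Hx).
Qed.

End StrongConvergence.

Section PNSpace.

Variables (V : ModuleSpace R_Ring) (nu : V -> dfun) (tau taus : dfun -> dfun -> dfun).
Hypothesis PN : PN_space nu tau taus.

Lemma strong_limit_unique r p p' :
  strong_conv nu r p -> strong_conv nu r p' -> p = p'.
Proof.
  intros Hp Hp'.
  destruct PN as (Ttri & Tcont & _ & _ & _ & nuD & N1 & N2 & N3 & _).
  assert (Hlim : weak_conv (fun m => tau (nu (minus p (r m))) (nu (minus (r m) p'))) eps0).
  { apply weak_conv_deq with (tau eps0 eps0).
    - apply Tcont; auto using eps0_Delta, strong_conv_weak_eps0, strong_conv_weak_eps0_opp.
    - apply triangle_eps0_l; auto using eps0_Delta. }
  apply minus_eq_zero_eq, N1, Delta_eq_eps0; [apply nuD|].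
  intros x Hx.
  pose proof (Hlim x (eps0_continuous x Hx)) as Hx_lim. rewrite eps0_pos in Hx_lim by exact Hx.
  change (Rbar_le 1 (nu (minus p p') x)).
  refine (is_lim_seq_le _ _ _ _ _ Hx_lim (is_lim_seq_const (nu (minus p p') x))).
  intro m. rewrite (minus_trans (r m) p p'). apply N3.
Qed.

Lemma D_compact_strong_closed A : D_compact nu A -> strong_closed nu A.
Proof.
  intros HA p Hp. apply NNPP. intro Hnot.
  assert (Hnear : forall n : nat, exists q, A q /\ N_strong nu p (/ (INR n + 1)) q).
  { intro n. apply NNPP. intro Hn. apply Hnot. exists (/ (INR n + 1)). split.
    - apply Rinv_0_lt_compat. pose proof (pos_INR n). lra.
    - intros q Hq HAq. apply Hn. eauto. }
  destruct (choice _ Hnear) as [q Hq].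
  destruct (HA q (fun n => proj1 (Hq n))) as (phi & p' & Hphi & HAp' & Hconv).
  assert (p = p') as <-; [|contradiction].
  apply (strong_limit_unique (fun m => q (phi m))); [|exact Hconv].
  apply strong_conv_subseq; [exact Hphi|].
  apply strong_conv_inv_succ; [apply PN|]. intro n. apply Hq.
Qed.

(* Lower semicontinuity of [nu] along strongly convergent sequences:
   [nu (r m) >= tau (nu (r m - p)) (nu p) >= tau (nu (r m - p)) G --> tau eps0 G = G]. *)
Lemma strong_conv_nu_eventually_gt r p (G : dfun) x e :
  strong_conv nu r p -> in_Delta G -> continuous G x -> dle G (nu p) -> 0 < e ->
  exists N, forall m, (N <= m)%nat -> G x - e < nu (r m) x.
Proof.
  intros Hr HG HGx HGp He.
  destruct PN as (Ttri & Tcont & _ & _ & _ & nuD & _ & N2 & N3 & _).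
  pose proof Ttri as (_ & _ & _ & _ & Tmono_r & _).
  assert (Hlim : is_lim_seq (fun m => tau (nu (minus (r m) p)) G x) (G x)).
  { apply (weak_conv_deq (fun m => tau (nu (minus (r m) p)) G) (tau eps0 G) G);
      [| apply triangle_eps0_l; auto | exact HGx].
    apply Tcont; auto using eps0_Delta, strong_conv_weak_eps0_opp.
    intros y _. apply is_lim_seq_const. }
  apply is_lim_seq_spec in Hlim. destruct (Hlim (mkposreal e He)) as [N HN].
  exists N. intros m Hm. specialize (HN m Hm). simpl in HN. apply Rabs_def2 in HN.
  pose proof (Tmono_r _ _ _ (nuD (minus (r m) p)) HG (nuD p) HGp x) as Hmono.
  pose proof (N3 (minus (r m) p) p x) as Htri.
  apply Rlt_le_trans with (tau (nu (minus (r m) p)) G x); [lra|].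
  apply (Rle_trans _ _ _ Hmono), (Rle_trans _ _ _ Htri), Req_le.
  exact (f_equal (fun v => nu v x) (plus_minus_cancel_r (r m) p)).
Qed.

Hypothesis nu_Dplus : forall p, in_Dplus (nu p).

Lemma D_compact_nu_uniformly_ge A :
  D_compact nu A -> forall e, 0 < e -> exists x0, forall q, A q -> 1 - e <= nu q x0.
Proof.
  intros HA e He. apply NNPP. intro Hnot.
  assert (Hbad : forall n : nat, exists q, A q /\ nu q (INR n) < 1 - e).
  { intro n. apply NNPP. intro Hn. apply Hnot. exists (INR n). intros q Hq.
    apply Rnot_lt_le. intro Hlt. apply Hn. eauto. }
  destruct (choice _ Hbad) as [q Hq].
  destruct (HA q (fun n => proj1 (Hq n))) as (phi & p & Hphi & _ & Hconv).
  destruct (Dplus_eventually_ge (nu p) (1 - e / 2)) as [a [Ha Hpa]]; [apply nu_Dplus | lra |].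
  (* [tau] is only continuous at continuity points of the limit, hence a continuous
     minorant of [nu p] rather than [nu p] itself. *)
  set (c := Rmax 0 (1 - e / 2)).
  assert (Hc : 0 <= c <= 1) by (unfold c, Rmax; destruct Rle_dec; lra).
  assert (Hramp : dle (ramp c a) (nu p)).
  { apply ramp_le; [exact Hc | apply nu_Dplus |].
    intros x Hx. specialize (Hpa x Hx). pose proof (proj1 (proj1 (nu_Dplus p)) x).
    unfold c, Rmax. destruct Rle_dec; lra. }
  destruct (strong_conv_nu_eventually_gt _ p (ramp c a) (a + 1) (e / 2) Hconv
              (ramp_Delta c a Hc Ha) (ramp_continuous c a Hc _) Hramp ltac:(lra)) as [N HN].
  rewrite ramp_top in HN.
  destruct (INR_archimed 1 (a + 1) Rlt_0_1) as [m0 Hm0]. rewrite Rmult_1_r in Hm0.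
  set (m := Nat.max N m0).
  specialize (HN m ltac:(unfold m; lia)).
  assert (Hphi_m : a + 1 <= INR (phi m)).
  { pose proof (strict_incr_ge_id phi Hphi m).
    assert (Hle : (m0 <= phi m)%nat) by (unfold m in *; lia).
    apply le_INR in Hle. lra. }
  destruct (proj1 (nu_Dplus (q (phi m)))) as [_ [_ [Hmono _]]].
  specialize (Hmono _ _ Hphi_m). destruct (Hq (phi m)) as [_ Hsmall].
  assert (1 - e / 2 <= c) by apply Rmax_r.
  lra.
Qed.

End PNSpace.

Theorem lemma24 (V : ModuleSpace R_Ring) (nu : V -> dfun)
  (tau taus : dfun -> dfun -> dfun) :
  PN_space nu tau taus ->
  (forall p : V, in_Dplus (nu p)) ->
  (forall F G, in_Dplus F -> in_Dplus G -> in_Dplus (tau F G)) ->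
  forall A : V -> Prop, (exists a, A a) ->
  D_compact nu A -> D_bounded nu A /\ strong_closed nu A.
Proof.
  intros PN nu_Dplus _ A [a A_a] HA.
  assert (nu_Delta : forall p, in_Delta (nu p)) by apply PN.
  pose proof (inf_nu_bounds V nu A a nu_Delta A_a) as Hbounds.
  assert (Hub : forall t, inf_nu nu A t <= 1) by apply Hbounds.
  split; [|exact (D_compact_strong_closed V nu tau taus PN A HA)].
  exists (left_sup (inf_nu nu A)). split; [|split].
  - intros x _. exact (left_sup_is_left_limit _ 1 Hub (inf_nu_nondecreasing V nu A a nu_Delta A_a) x).
  - exact (left_sup_Delta _ Hbounds (inf_nu_nonpos V nu A a nu_Delta A_a)).
  - apply left_sup_lim_p_infty; [exact Hub|]. intros e He.
    destruct (D_compact_nu_uniformly_ge V nu tau taus PN nu_Dplus A HA e He) as [x0 Hx0].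
    exists x0. exact (inf_nu_ge V nu A a nu_Delta A_a x0 _ Hx0).
Qed.
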